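(* Let $(V,\mathcal H,\iota,W)$ be an abelian functional theory with set of weights $\Omega$, let $F$ be a facet of $\mathrm{conv}(\Omega)$, and consider the restricted functional theory $(V,\mathcal H_F,\iota_F,\Pi_FW\Pi_F^\dagger)$ on $F$. Then: (1) the restricted theory is abelian; (2) $\Omega_F:=\Omega\cap F$ is its set of weights; (3) $\dim\iota_F^{-1}(\mathrm{span}\{\mathbb 1_F\})=\dim\iota^{-1}(\mathrm{span}\{\mathbb 1\})+1$; (4) for every pure state $\Gamma$ on $\mathcal H$, $\iota^*(\Gamma)\in F$ iff $\Gamma\in\mathcal P_F$; (5) for every density operator $\Gamma$ on $\mathcal H$, $\iota^*(\Gamma)\in F$ iff $\Gamma\in\mathcal E_F$; (6) $\mathcal F_p^{(F)}=\mathcal F_p|_F$; (7) $\mathcal F_e^{(F)}=\mathcal F_e|_F$.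
   Context: A generalized functional theory is a tuple $(V,\mathcal H,\iota,W)$ with $V$ a finite-dimensional real vector space, $\mathcal H$ a finite-dimensional complex Hilbert space, $\iota:V\to i\mathfrak u(\mathcal H)$ linear into the Hermitian operators, $W$ Hermitian; it is abelian if all $\iota(v)$ commute. States are regarded as linear functionals via the trace and $\iota^*$ is the dual map. Weights: $\alpha\in V^*$ with $\mathcal H_\alpha:=\{\psi:\iota(v)\psi=\langle\alpha,v\rangle\psi\ \forall v\}\ne0$; $\Omega$ is the set of weights, and $\mathrm{conv}(\Omega)$ is a convex polytope. For a facet $F$, $\mathcal H_F=\bigoplus_{\omega\in\Omega\cap F}\mathcal H_\omega$, $\Pi_F:\mathcal H\to\mathcal H_F$ the orthogonal projection, $\iota_F(v)=\Pi_F\iota(v)\Pi_F^\dagger$, $\mathbb 1_F$ the identity on $\mathcal H_F$; $\mathcal P_F,\mathcal E_F$ are the pure states and density operators on $\mathcal H_F$ (viewed as states on $\mathcal H$). For any theory, $\mathcal F_p(\rho)=\min\{\mathrm{Tr}(\Gamma W):\Gamma\text{ pure},\iota^*(\Gamma)=\rho\}$ and $\mathcal F_e(\rho)=\min\{\mathrm{Tr}(\Gamma W):\Gamma\text{ density operator},\iota^*(\Gamma)=\rho\}$; $\mathcal F_p^{(F)},\mathcal F_e^{(F)}$ denote those of the restricted theory. *)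

From HB Require Import structures.
From mathcomp Require Import all_boot all_order all_algebra.
From mathcomp Require Import all_classical all_reals ereal.
From mathcomp Require Import complex.

Set Implicit Arguments.
Unset Strict Implicit.
Unset Printing Implicit Defensive.

Import Order.TTheory GRing.Theory Num.Theory.
Local Open Scope ring_scope.
Local Open Scope complex_scope.
Local Open Scope classical_set_scope.

(* V = R^d is modelled by row vectors 'rV[R]_d (the coordinate
   choice is harmless); the dual V^* is also modelled by 'rV[R]_d with the
   pairing <alpha, v> = sum_k alpha_k v_k.  The Hilbert space H = C^n is
   modelled by column vectors 'cV[R[i]]_n.  A linear map iota_map : V -> iu(H)
   is given by its values A k on the standard basis (A k Hermitian). *)

Section Defs.
Variable R : realType.
Local Notation C := R[i].

Definition adjmx (p q : nat) (M : 'M[C]_(p, q)) : 'M[C]_(q, p) :=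
  (map_mx (@conjc R) M)^T.

Definition is_herm (p : nat) (M : 'M[C]_p) : Prop := adjmx M = M.

Variable d : nat.

Definition dpair (alpha v : 'rV[R]_d) : R := \sum_(k < d) alpha 0 k * v 0 k.

Section Theory.
Variable n : nat.
Variable A : 'I_d -> 'M[C]_n.

Definition iota_map (v : 'rV[R]_d) : 'M[C]_n := \sum_(k < d) (v 0 k)%:C *: A k.

Definition abelian_th : Prop :=
  forall v w : 'rV[R]_d, iota_map v *m iota_map w = iota_map w *m iota_map v.

Definition in_wspace (alpha : 'rV[R]_d) (psi : 'cV[C]_n) : Prop :=
  forall v : 'rV[R]_d, iota_map v *m psi = (dpair alpha v)%:C *: psi.

Definition is_weight (alpha : 'rV[R]_d) : Prop :=
  exists psi : 'cV[C]_n, psi != 0 /\ in_wspace alpha psi.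

Definition weight_set : set 'rV[R]_d := [set alpha | is_weight alpha].

Definition in_HF (F : set 'rV[R]_d) (psi : 'cV[C]_n) : Prop :=
  exists (k : nat) (om : 'I_k -> 'rV[R]_d) (phi : 'I_k -> 'cV[C]_n),
    (forall j, is_weight (om j) /\ F (om j) /\ in_wspace (om j) (phi j)) /\
    psi = \sum_(j < k) phi j.

(* iota_map^* (Gamma) in V^*, Gamma seen as a functional via the trace *)
Definition istar (G : 'M[C]_n) : 'rV[R]_d := \row_(k < d) complex.Re (\tr (G *m A k)).

Definition pre_span1 : set 'rV[R]_d :=
  [set v | exists c : R, iota_map v = (c%:C)%:M].

End Theory.

Definition density_op (n : nat) (G : 'M[C]_n) : Prop :=
  is_herm G /\ (forall psi : 'cV[C]_n, 0 <= (adjmx psi *m G *m psi) 0 0)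
  /\ \tr G = 1.

Definition pure_state (n : nat) (G : 'M[C]_n) : Prop :=
  exists psi : 'cV[C]_n, (adjmx psi *m psi) 0 0 = 1 /\ G = psi *m adjmx psi.

(* F_p and F_e; the minimum over an empty set is +oo *)
Definition Fp (n : nat) (A : 'I_d -> 'M[C]_n) (W : 'M[C]_n) (rho : 'rV[R]_d)
  : \bar R :=
  ereal_inf [set y | exists G : 'M[C]_n,
     pure_state G /\ istar A G = rho /\ y = (complex.Re (\tr (G *m W)))%:E].

Definition Fe (n : nat) (A : 'I_d -> 'M[C]_n) (W : 'M[C]_n) (rho : 'rV[R]_d)
  : \bar R :=
  ereal_inf [set y | exists G : 'M[C]_n,
     density_op G /\ istar A G = rho /\ y = (complex.Re (\tr (G *m W)))%:E].

Definition has_dim (S : set 'rV[R]_d) (k : nat) : Prop :=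
  exists B : 'M[R]_(k, d), row_free B /\ (forall v, S v <-> (v <= B)%MS).

Definition conv_hull (S : set 'rV[R]_d) : set 'rV[R]_d :=
  [set x | exists (k : nat) (p : 'I_k -> 'rV[R]_d) (l : 'I_k -> R),
     (forall j, S (p j)) /\ (forall j, 0 <= l j) /\ \sum_(j < k) l j = 1 /\
     x = \sum_(j < k) l j *: p j].

Definition affdim_ge (S : set 'rV[R]_d) (k : nat) : Prop :=
  exists p : 'I_k.+1 -> 'rV[R]_d, (forall j, S (p j)) /\
    row_free (\matrix_(j < k) (p (lift ord0 j) - p ord0)).

Definition has_affdim (S : set 'rV[R]_d) (k : nat) : Prop :=
  affdim_ge S k /\ ~ affdim_ge S k.+1.

Definition is_face (Q F : set 'rV[R]_d) : Prop :=
  exists (v : 'rV[R]_d) (c : R), (forall x, Q x -> dpair x v <= c) /\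
    F = [set x | Q x /\ dpair x v = c].

Definition is_facet (Q F : set 'rV[R]_d) : Prop :=
  is_face Q F /\ (exists x, F x) /\
  exists k : nat, has_affdim F k /\ has_affdim Q k.+1.

(* restricted theory (V, H_F, Pi_F iota_map Pi_F^dagger, Pi_F W Pi_F^dagger),
   with H_F identified with C^m through a co-isometry P : C^n -> C^m *)
Definition restrA (n m : nat) (P : 'M[C]_(m, n)) (A : 'I_d -> 'M[C]_n)
  : 'I_d -> 'M[C]_m := fun k => P *m A k *m adjmx P.

Definition restrW (n m : nat) (P : 'M[C]_(m, n)) (W : 'M[C]_n) : 'M[C]_m :=
  P *m W *m adjmx P.

(* P_F and E_F : pure_state states / density_op operators on H_F, viewed on H *)
Definition in_PF (n m : nat) (P : 'M[C]_(m, n)) (G : 'M[C]_n) : Prop :=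
  exists G' : 'M[C]_m, pure_state G' /\ G = adjmx P *m G' *m P.

Definition in_EF (n m : nat) (P : 'M[C]_(m, n)) (G : 'M[C]_n) : Prop :=
  exists G' : 'M[C]_m, density_op G' /\ G = adjmx P *m G' *m P.

End Defs.

From HB Require Import structures.
From mathcomp Require Import all_boot all_order all_algebra.
From mathcomp Require Import all_classical all_reals ereal.
From mathcomp Require Import complex.
From mathcomp Require Import lra zify.

(** Commuting Hermitian matrices are simultaneously unitarily diagonalisable,
    A_k = U diag(lam_k) U^dagger, so the weights are the rows
    omega_i = (lam_k i)_k of joint eigenvalues, with eigenvectors u_i = U e_i,
    and H_F is spanned by the u_i with omega_i in F.  For a density operator
    G, iota^*(G) = sum_i p_i omega_i where p_i = <u_i, G u_i> is a probability
    vector.  As F is cut out of conv(Omega) by a supporting hyperplane,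
    iota^*(G) lies in F iff p_i = 0 whenever omega_i is not in F, iff G
    annihilates those u_i, iff G lives on H_F: this is (4) and (5), and (6),
    (7) follow by moving states along the co-isometry P.  The range projection
    Q = P^dagger P commutes with iota, which gives (1) and (2).  Finally
    iota^-1(span 1) is the annihilator of the differences omega_i - omega_i1,
    which span a space of dimension dim conv(Omega) = dim F + 1, while
    iota_F^-1(span 1_F) is the annihilator of the differences inside F, which
    span a space of dimension dim F. *)

Set Implicit Arguments.
Unset Strict Implicit.
Unset Printing Implicit Defensive.
Import Order.TTheory GRing.Theory Num.Theory.
Local Open Scope ring_scope.
Local Open Scope complex_scope.

Section ComplexScalars.
Variable R : realType.
Local Notation C := R[i].

Lemma cRe_sum I (r : seq I) (P : pred I) (f : I -> C) :
  complex.Re (\sum_(i <- r | P i) f i) = \sum_(i <- r | P i) complex.Re (f i).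
Proof.
by apply: (big_morph (@complex.Re R) (id1 := 0) (op1 := +%R)) => // [[a b] [c e]].
Qed.

Lemma cReD (x y : C) : complex.Re (x + y) = complex.Re x + complex.Re y.
Proof. by case: x; case: y. Qed.

Lemma cReMr (r : R) (w : C) : complex.Re (r%:C * w) = r * complex.Re w.
Proof. by case: w => a b /=; rewrite mul0r subr0. Qed.

Lemma cRe_ge0 (z : C) : 0 <= z -> 0 <= complex.Re z.
Proof. by rewrite lecE => /andP[]. Qed.

Lemma cRe_conjcM (z : C) :
  complex.Re (conjc z * z) = complex.Re z ^+ 2 + complex.Im z ^+ 2.
Proof. by case: z => a b /=; rewrite !expr2 mulNr opprK. Qed.

Lemma conjcR (r : R) : conjc (r%:C) = r%:C :> C.
Proof. by rewrite /= oppr0. Qed.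

Lemma conjc_fixed_real (z : C) : conjc z = z -> (complex.Re z)%:C = z.
Proof. by case: z => a b /= [] hb; congr (_ +i* _); lra. Qed.

Lemma quad_ge0_linear_eq0 (a b : R) :
  0 <= b -> (forall t, 0 <= 2 * t * a + t ^+ 2 * b) -> a = 0.
Proof.
move=> b0 quad_ge0; pose t := - a / (b + 1).
have tE : t * (b + 1) = - a by rewrite /t mulfVK // gt_eqF // ltr_wpDl.
have := quad_ge0 t; have -> : a = - (t * (b + 1)) by rewrite tE opprK.
move=> h; have t0 : t = 0 by nra.
by rewrite t0 mul0r oppr0.
Qed.

End ComplexScalars.

Section Adjoint.
Variable R : realType.
Local Notation C := R[i].

Lemma adjmxE p q (M : 'M[C]_(p, q)) i j : adjmx M i j = conjc (M j i).
Proof. by rewrite !mxE. Qed.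

Lemma adjmxK p q (M : 'M[C]_(p, q)) : adjmx (adjmx M) = M.
Proof. by apply/matrixP=> i j; rewrite !adjmxE conjcK. Qed.

Lemma adjmxM p q r (M : 'M[C]_(p, q)) (N : 'M[C]_(q, r)) :
  adjmx (M *m N) = adjmx N *m adjmx M.
Proof. by rewrite /adjmx map_mxM trmx_mul. Qed.

Lemma adjmxD p q (M N : 'M[C]_(p, q)) : adjmx (M + N) = adjmx M + adjmx N.
Proof. by rewrite /adjmx map_mxD linearD. Qed.

Lemma adjmxZ p q a (M : 'M[C]_(p, q)) : adjmx (a *: M) = conjc a *: adjmx M.
Proof. by rewrite /adjmx map_mxZ linearZ. Qed.

Lemma adjmx_herm p q (X : 'M[C]_(p, q)) (G : 'M[C]_p) :
  is_herm G -> is_herm (adjmx X *m G *m X).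
Proof. by move=> Gh; rewrite /is_herm !adjmxM adjmxK Gh mulmxA. Qed.

Lemma mx11_mul (M N : 'M[C]_1) : (M *m N) 0 0 = M 0 0 * N 0 0.
Proof. by rewrite mxE big_ord1. Qed.

Lemma matrix_neq0 p q (M : 'M[C]_(p, q)) : M != 0 -> exists i j, M i j != 0.
Proof.
move=> /eqP M0; apply: contrapT => Mij; apply: M0; apply/matrixP => i j.
rewrite mxE; case: (eqVneq (M i j) 0) => // Mij0.
by exfalso; apply: Mij; exists i, j.
Qed.

Lemma cRe_normmx_eq0 p (y : 'cV[C]_p) :
  complex.Re ((adjmx y *m y) 0 0) = 0 -> y = 0.
Proof.
rewrite mxE cRe_sum => y0; apply/matrixP => j k; rewrite ord1 mxE.
have yj_ge0 i : true -> 0 <= complex.Re (adjmx y 0 i * y i 0).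
  by rewrite adjmxE cRe_conjcM addr_ge0 ?sqr_ge0.
have := psumr_eq0P yj_ge0 y0 (i := j) isT.
rewrite adjmxE cRe_conjcM; case: (y j 0) => a b /= ab0.
by congr (_ +i* _); nra.
Qed.

End Adjoint.

Section States.
Variable R : realType.
Local Notation C := R[i].

(* As in the proof of Cauchy-Schwarz, expand the form at x + t G x. *)
Lemma psd_form_eq0 p (G : 'M[C]_p) (x : 'cV[C]_p) : is_herm G ->
  (forall psi : 'cV[C]_p, 0 <= (adjmx psi *m G *m psi) 0 0) ->
  complex.Re ((adjmx x *m G *m x) 0 0) = 0 -> G *m x = 0.
Proof.
move=> Gh G_psd x0; set y := G *m x.
have Gxy : adjmx x *m G *m y = adjmx y *m y by rewrite /y adjmxM Gh.
have Gyx : adjmx y *m G *m x = adjmx y *m y by rewrite -mulmxA.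
apply: cRe_normmx_eq0.
apply: (quad_ge0_linear_eq0 (b := complex.Re ((adjmx y *m G *m y) 0 0))).
  exact: cRe_ge0.
move=> t; have := cRe_ge0 (G_psd (x + t%:C *: y)).
rewrite adjmxD adjmxZ conjcR !mulmxDl !mulmxDr -!scalemxAl -!scalemxAr Gxy Gyx.
move: x0; move: (adjmx x *m G *m x) (adjmx y *m y) (adjmx y *m G *m y).
by move=> X1 X2 X3 x0; rewrite !mxE !cReD !cReMr x0; nra.
Qed.

Lemma pure_state_density n (G : 'M[C]_n) : pure_state G -> density_op G.
Proof.
move=> [psi [psi1 ->]]; split; first by rewrite /is_herm adjmxM adjmxK.
split; last by rewrite mxtrace_mulC /mxtrace big_ord1.
move=> x; rewrite mulmxA -mulmxA mx11_mul.
have -> : (adjmx psi *m x) 0 0 = conjc ((adjmx x *m psi) 0 0).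
  by rewrite -adjmxE adjmxM adjmxK.
exact: mulcJ_ge0.
Qed.

End States.

Section Geometry.
Variables (R : realType) (d : nat).
Local Open Scope classical_set_scope.

Lemma dpairE (a v : 'rV[R]_d) : dpair a v = (a *m v^T) 0 0.
Proof. by rewrite /dpair mxE; apply: eq_bigr => k _; rewrite mxE. Qed.

Lemma dpair_delta (a : 'rV[R]_d) k : dpair a (delta_mx 0 k) = a 0 k.
Proof.
rewrite /dpair (bigD1 k) //= big1 ?addr0; first by rewrite mxE !eqxx mulr1.
by move=> j /negPf nj; rewrite mxE nj andbF mulr0.
Qed.

Lemma dpairB (a b v : 'rV[R]_d) : dpair (a - b) v = dpair a v - dpair b v.
Proof. by rewrite !dpairE mulmxBl !mxE. Qed.

Lemma dpair_sum N (l : 'I_N -> R) (p : 'I_N -> 'rV[R]_d) v :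
  dpair (\sum_j l j *: p j) v = \sum_j l j * dpair (p j) v.
Proof.
rewrite dpairE mulmx_suml summxE; apply: eq_bigr => j _.
by rewrite -scalemxAl mxE dpairE.
Qed.

Lemma sub_kermx_trP N (M : 'M[R]_(N, d)) v :
  (v <= kermx M^T)%MS <-> forall i, dpair (row i M) v = 0.
Proof.
have vM i : (v *m M^T) 0 i = dpair (row i M) v.
  by rewrite mxE /dpair; apply: eq_bigr => k _; rewrite !mxE mulrC.
rewrite sub_kermx; split; first by move/eqP/rowP => v0 i; rewrite -vM v0 mxE.
by move=> v0; apply/eqP/rowP => i; rewrite vM v0 mxE.
Qed.

Lemma has_dim_rank (S : set 'rV[R]_d) p (X : 'M[R]_(p, d)) :
  (forall v, S v <-> (v <= X)%MS) -> has_dim S (\rank X).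
Proof.
move=> SX; exists (row_base X); split; first exact: row_base_free.
by move=> v; rewrite eq_row_base; apply: SX.
Qed.

Lemma has_dim_annihilator (S : set 'rV[R]_d) N (M : 'M[R]_(N, d)) :
  (forall v, S v <-> forall i, dpair (row i M) v = 0) -> has_dim S (d - \rank M).
Proof.
move=> SM; rewrite -mxrank_tr -mxrank_ker; apply: has_dim_rank => v.
by rewrite sub_kermx_trP SM.
Qed.

Lemma conv_hullW (S : set 'rV[R]_d) x : S x -> conv_hull S x.
Proof.
move=> Sx; exists 1%N, (fun=> x), (fun=> 1); split; last split; last split.
- by [].
- by move=> _; apply: ler01.
- by rewrite big_ord1.
- by rewrite big_ord1 scale1r.
Qed.

Lemma conv_comb_subr N (p : 'I_N -> 'rV[R]_d) (l : 'I_N -> R) s0 :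
  \sum_j l j = 1 -> \sum_j l j *: p j - s0 = \sum_j l j *: (p j - s0).
Proof.
move=> l1; under [RHS]eq_bigr do rewrite scalerBr.
by rewrite sumrB -scaler_suml l1 scale1r.
Qed.

Lemma row_free_rowsub (K : fieldType) p q r (X : 'M[K]_(p, q)) (h : 'I_r -> 'I_p) :
  row_free X -> injective h -> row_free (rowsub h X).
Proof.
move=> X_free h_inj; apply/inj_row_free => v; rewrite rowsubE mulmxA => /eqP.
rewrite mulmx_free_eq0 // => /eqP/rowP v0; apply/rowP => j.
move: (v0 (h j)); rewrite !mxE (bigD1 j) //= big1 ?addr0.
  by rewrite !mxE eqxx mulr1.
by move=> l lj; rewrite !mxE (inj_eq h_inj) (negPf lj) mulr0.
Qed.

Lemma has_affdim_rank (S : set 'rV[R]_d) N (M : 'M[R]_(N, d))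
    (s0 : 'rV[R]_d) (g : 'I_N -> 'rV[R]_d) k :
  S s0 -> (forall j, S (g j)) -> (forall j, row j M = g j - s0) ->
  (forall s, S s -> (s - s0 <= M)%MS) -> has_affdim S k -> \rank M = k.
Proof.
move=> S0 Sg Mrow M_span [[p [Sp p_free]] not_ge]; apply/eqP; rewrite eqn_leq.
apply/andP; split; last first.
  move/eqP: p_free => <-; apply: mxrankS; apply/row_subP => j; rewrite rowK.
  have -> : p (lift ord0 j) - p ord0 = (p (lift ord0 j) - s0) - (p ord0 - s0).
    by rewrite opprB addrA subrK.
  apply: addmx_sub; first exact: M_span.
  by rewrite -scaleN1r; apply: scalemx_sub; apply: M_span.
rewrite leqNgt; apply/negP => lt_k_rk; apply: not_ge.
pose f := maxrankfun M \o @widen_ord k.+1 (\rank M) lt_k_rk.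
exists (fun j => if unlift ord0 j is Some j' then g (f j') else s0).
split; first by move=> j; case: (unlift ord0 j).
have -> : \matrix_j ((if unlift ord0 (lift ord0 j) is Some j' then g (f j') else s0)
                     - (if unlift ord0 ord0 is Some j' then g (f j') else s0))
          = rowsub f M.
  by apply/row_matrixP => j; rewrite rowK row_rowsub liftK unlift_none Mrow.
rewrite /f rowsub_comp; apply: row_free_rowsub; first exact: maxrowsub_free.
by move=> a b /(congr1 val) /= ab; apply: val_inj.
Qed.

End Geometry.

Section Spectral.
Variable R : realType.
Local Notation C := R[i].

Lemma iota_map_delta d n (A : 'I_d -> 'M[C]_n) k : iota_map A (delta_mx 0 k) = A k.
Proof.
rewrite /iota_map (bigD1 k) //= big1 ?addr0; first by rewrite mxE !eqxx /= scale1r.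
by move=> j /negPf jk; rewrite mxE eqxx jk /= scale0r.
Qed.

Lemma herm_trig_diag n (B : 'M[C]_n) : is_herm B -> is_trig_mx B ->
  B = diag_mx (\row_i (complex.Re (B i i))%:C).
Proof.
move=> Bh /is_trig_mxP B_trig; apply/matrixP => i j; rewrite !mxE.
case: (eqVneq i j) => [<-|ij]; rewrite ?mulr1n ?mulr0n.
  by apply/esym/conjc_fixed_real; rewrite -[in RHS]Bh adjmxE.
case: (ltngtP i j) => [lt_ij|lt_ji|/val_inj eq_ij]; first exact: B_trig.
  by rewrite -Bh adjmxE B_trig // conjc0.
by rewrite eq_ij eqxx in ij.
Qed.

Lemma abelian_spectral d n (A : 'I_d -> 'M[C]_n) :
  (forall k, is_herm (A k)) -> abelian_th A ->
  exists (U : 'M[C]_n) (lam : 'I_d -> 'I_n -> R),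
   [/\ U *m adjmx U = 1%:M, adjmx U *m U = 1%:M &
     forall k, A k = U *m diag_mx (\row_i (lam k i)%:C) *m adjmx U].
Proof.
move=> Ah Ab.
have [|V V_unitary /allP V_trig] := @cotrigonalization C n [seq A k | k <- enum 'I_d].
  move=> _ _ /mapP[k _ ->] /mapP[j _ ->].
  by rewrite /comm_mx -!(iota_map_delta A) Ab.
have VV : V *m adjmx V = 1%:M.
  by move/unitarymxP: V_unitary; rewrite /adjmx map_trmx.
have VV' : adjmx V *m V = 1%:M by apply: mulmx1C.
pose B k := V *m A k *m adjmx V.
have B_trig k : is_trig_mx (B k).
  have := V_trig (A k) (map_f _ (mem_enum _ k)).
  rewrite /= /similar_to (conjymx (A k) V_unitary).
  by have -> : (V ^t* )%sesqui = adjmx V by rewrite /adjmx map_trmx.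
have Bh k : is_herm (B k) by rewrite /B /is_herm !adjmxM adjmxK Ah mulmxA.
exists (adjmx V), (fun k i => complex.Re (B k i i)); rewrite adjmxK; split => // k.
rewrite -(herm_trig_diag (Bh k) (B_trig k)) /B !mulmxA VV' mul1mx.
by rewrite -mulmxA VV' mulmx1.
Qed.

End Spectral.

Section Face.
Variables (R : realType) (d : nat).
Variables (S F : set 'rV[R]_d) (v0 : 'rV[R]_d) (c0 : R).
Local Open Scope classical_set_scope.
Hypotheses (supp : forall x, conv_hull S x -> dpair x v0 <= c0)
  (FE : F = [set x | conv_hull S x /\ dpair x v0 = c0]).

Lemma face_conv x : F x -> conv_hull S x.
Proof. by rewrite FE => -[]. Qed.

Lemma face_memP x : conv_hull S x -> F x <-> dpair x v0 = c0.
Proof. by move=> Sx; rewrite FE /=; split => [[]|]. Qed.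

(* The combination meets the supporting hyperplane iff every point carrying
   positive weight does, as sum_j l_j (c0 - <p_j, v0>) is a sum of
   nonnegative terms. *)
Lemma face_conv_combP N (p : 'I_N -> 'rV[R]_d) (l : 'I_N -> R) :
  (forall j, S (p j)) -> (forall j, 0 <= l j) -> \sum_j l j = 1 ->
  F (\sum_j l j *: p j) <-> forall j, l j != 0 -> F (p j).
Proof.
move=> Sp l_ge0 l1.
have Sx : conv_hull S (\sum_j l j *: p j) by exists N, p, l.
rewrite (face_memP Sx) dpair_sum.
have gapE : c0 - \sum_j l j * dpair (p j) v0 = \sum_j l j * (c0 - dpair (p j) v0).
  by under [RHS]eq_bigr do rewrite mulrBr; rewrite sumrB -mulr_suml l1 mul1r.
have gap_ge0 j : true -> 0 <= l j * (c0 - dpair (p j) v0).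
  by move=> _; rewrite mulr_ge0 // subr_ge0 supp //; apply: conv_hullW.
have FpP j : F (p j) <-> dpair (p j) v0 = c0.
  by apply: face_memP; apply: conv_hullW.
split => [hyp j lj | Fp].
  have /(psumr_eq0P gap_ge0)/(_ j isT)/eqP : \sum_j l j * (c0 - dpair (p j) v0) = 0.
    by rewrite -gapE hyp subrr.
  by rewrite mulf_eq0 (negPf lj) subr_eq0 => /eqP/esym/FpP.
apply/eqP; rewrite -subr_eq0 -oppr_eq0 opprB gapE; apply/eqP/big1 => j _.
have [->|lj] := eqVneq (l j) 0; first by rewrite mul0r.
by rewrite (proj1 (FpP j) (Fp j lj)) subrr mulr0.
Qed.

End Face.

Section StateInfimum.
Variables (R : realType) (d : nat).
Local Open Scope classical_set_scope.

(* [Fp] and [Fe] are [state_inf pure_state] and [state_inf density_op]. *)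
Definition state_inf (S : forall k, 'M[R[i]]_k -> Prop) k (B : 'I_d -> 'M[R[i]]_k)
    (X : 'M[R[i]]_k) (rho : 'rV[R]_d) : \bar R :=
  ereal_inf [set y | exists G, S k G /\ istar B G = rho /\
                               y = (complex.Re (\tr (G *m X)))%:E].

End StateInfimum.

Section Compression.
Variables (R : realType) (n m : nat) (P : 'M[R[i]]_(m, n)).
Local Notation C := R[i].
Hypothesis PP : P *m adjmx P = 1%:M.

(* Locked, as rewriting with [mulmxA] would otherwise unfold it. *)
Fact coproj_key : unit. Proof. by []. Qed.
Definition coproj : 'M[C]_n := locked_with coproj_key (adjmx P *m P).
Lemma coprojE : coproj = adjmx P *m P. Proof. exact: unlock. Qed.

Lemma coproj_adj : coproj *m adjmx P = adjmx P.
Proof. by rewrite coprojE -mulmxA PP mulmx1. Qed.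

Lemma P_coproj : P *m coproj = P.
Proof. by rewrite coprojE mulmxA PP mul1mx. Qed.

Lemma coproj_idem : coproj *m coproj = coproj.
Proof. by rewrite coprojE -mulmxA (mulmxA P) PP mul1mx. Qed.

Lemma coproj_herm : adjmx coproj = coproj.
Proof. by rewrite coprojE adjmxM adjmxK. Qed.

Lemma coproj_lift (G' : 'M[C]_m) :
  coproj *m (adjmx P *m G' *m P) *m coproj = adjmx P *m G' *m P.
Proof. by rewrite !mulmxA coproj_adj -[_ *m P *m coproj]mulmxA P_coproj. Qed.

Lemma lift_density (G' : 'M[C]_m) :
  density_op G' -> density_op (adjmx P *m G' *m P).
Proof.
move=> [G'h [G'_psd trG']]; split; first exact: adjmx_herm.
split; last by rewrite -mulmxA mxtrace_mulC -mulmxA PP mulmx1.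
by move=> x; have := G'_psd (P *m x); rewrite adjmxM !mulmxA.
Qed.

Lemma lift_pure (G' : 'M[C]_m) :
  pure_state G' -> pure_state (adjmx P *m G' *m P).
Proof.
move=> [x [x1 ->]]; exists (adjmx P *m x); split.
  by rewrite adjmxM adjmxK mulmxA -(mulmxA (adjmx x)) PP mulmx1.
by rewrite adjmxM adjmxK !mulmxA.
Qed.

Lemma compress_density (G : 'M[C]_n) :
  density_op G -> coproj *m G = G -> density_op (P *m G *m adjmx P).
Proof.
move=> [Gh [G_psd trG]] QG; split; first by rewrite /is_herm !adjmxM adjmxK Gh mulmxA.
split; first by move=> x; have := G_psd (adjmx P *m x); rewrite adjmxM adjmxK !mulmxA.
by rewrite mxtrace_mulC mulmxA -coprojE QG.
Qed.

Lemma compress_pure (G : 'M[C]_n) :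
  pure_state G -> coproj *m G = G -> pure_state (P *m G *m adjmx P).
Proof.
move=> [psi [psi1 GE]] QG.
have psi1M : adjmx psi *m psi = 1%:M.
  by apply/matrixP => a b; rewrite !ord1 psi1 mxE eqxx mulr1n.
have Qpsi : coproj *m psi = psi.
  by have := congr1 (mulmx^~ psi) QG; rewrite GE -!mulmxA psi1M !mulmx1.
exists (P *m psi); split; last by rewrite GE adjmxM !mulmxA.
by rewrite adjmxM mulmxA -(mulmxA _ (adjmx P)) -coprojE -mulmxA Qpsi.
Qed.

Lemma iota_restrA d (A : 'I_d -> 'M[C]_n) v :
  iota_map (restrA P A) v = P *m iota_map A v *m adjmx P.
Proof.
rewrite /iota_map /restrA; under eq_bigr do rewrite scalemxAl scalemxAr.
by rewrite -mulmx_suml -mulmx_sumr.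
Qed.

Lemma istar_lift d (A : 'I_d -> 'M[C]_n) (G' : 'M[C]_m) :
  istar A (adjmx P *m G' *m P) = istar (restrA P A) G'.
Proof.
apply/rowP => k; rewrite !mxE /restrA; congr complex.Re.
by rewrite -!mulmxA mxtrace_mulC !mulmxA.
Qed.

Lemma tr_lift (G' : 'M[C]_m) (W : 'M[C]_n) :
  \tr (adjmx P *m G' *m P *m W) = \tr (G' *m restrW P W).
Proof. by rewrite /restrW -!mulmxA mxtrace_mulC !mulmxA. Qed.

Section RestrictedInfimum.
Variables (d : nat) (A : 'I_d -> 'M[C]_n) (F : set 'rV[R]_d).
Variables (St : forall k, 'M[C]_k -> Prop) (W : 'M[C]_n) (rho : 'rV[R]_d).
Local Open Scope classical_set_scope.

Lemma restr_state_inf_in :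
  (forall G' : 'M[C]_m, St G' -> St (adjmx P *m G' *m P)) ->
  (forall G : 'M[C]_n, St G -> F (istar A G) ->
     exists G', St G' /\ G = adjmx P *m G' *m P) ->
  F rho -> state_inf St (restrA P A) (restrW P W) rho = state_inf St A W rho.
Proof.
move=> St_lift St_compress Frho; congr ereal_inf; apply/seteqP.
split => y /= [G [StG [Grho ->]]].
  exists (adjmx P *m G *m P); rewrite istar_lift tr_lift.
  by split; first exact: St_lift.
have [|G' [StG' GE]] := St_compress G StG; first by rewrite Grho.
exists G'; split => //.
by split; [rewrite -istar_lift -GE | rewrite -tr_lift -GE].
Qed.

Lemma restr_state_inf_out :
  (forall G' : 'M[C]_m, St G' -> F (istar A (adjmx P *m G' *m P))) ->
  ~ F rho -> state_inf St (restrA P A) (restrW P W) rho = +oo%E.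
Proof.
move=> St_face nFrho; rewrite -(ereal_inf0 R); congr ereal_inf.
apply/seteqP; split => y //= [G' [StG' [G'rho _]]]; apply: nFrho.
by rewrite -G'rho -istar_lift; apply: St_face.
Qed.

End RestrictedInfimum.

End Compression.

Section JointEigenbasis.
Variables (R : realType) (d n : nat) (A : 'I_d -> 'M[R[i]]_n).
Variables (U : 'M[R[i]]_n) (lam : 'I_d -> 'I_n -> R).
Local Notation C := R[i].
Local Open Scope classical_set_scope.
Hypotheses (UU : U *m adjmx U = 1%:M) (UU' : adjmx U *m U = 1%:M)
  (AE : forall k, A k = U *m diag_mx (\row_i (lam k i)%:C) *m adjmx U).

Definition omega i : 'rV[R]_d := \row_k lam k i.

Local Notation e i := (delta_mx i (0 : 'I_1) : 'cV[C]_n).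
Local Notation D v := (diag_mx (\row_i (dpair (omega i) v)%:C)).

Definition eigv i := U *m e i.

Lemma iota_mapE v : iota_map A v = U *m D v *m adjmx U.
Proof.
rewrite /iota_map; under eq_bigr do rewrite AE scalemxAl scalemxAr.
rewrite -mulmx_suml -mulmx_sumr; congr (_ *m _ *m _).
apply/matrixP => a b; rewrite summxE !mxE.
have [->|ab] := eqVneq a b.
  rewrite mulr1n /dpair rmorph_sum; apply: eq_bigr => k _.
  by rewrite !mxE eqxx mulr1n rmorphM mulrC.
by rewrite mulr0n big1 // => k _; rewrite !mxE (negPf ab) mulr0n mulr0.
Qed.

Lemma adjU_eigv i : adjmx U *m eigv i = e i.
Proof. by rewrite /eigv mulmxA UU' mul1mx. Qed.

Lemma eigv_neq0 i : eigv i != 0.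
Proof.
apply/eqP => /(congr1 (mulmx (adjmx U))); rewrite adjU_eigv mulmx0.
by move/matrixP/(_ i 0); rewrite !mxE !eqxx => /eqP; rewrite oner_eq0.
Qed.

Lemma iota_eigv v i : iota_map A v *m eigv i = (dpair (omega i) v)%:C *: eigv i.
Proof.
rewrite iota_mapE -!mulmxA adjU_eigv /eigv scalemxAr; congr (_ *m _).
apply/matrixP => a b; rewrite mul_diag_mx !mxE.
by have [->|] := eqVneq a i; rewrite ?mulr1 ?mulr0.
Qed.

Lemma eigv_scale_inj (a b : R) i : a%:C *: eigv i = b%:C *: eigv i -> a = b.
Proof.
move=> /(congr1 (mulmx (adjmx U))); rewrite -!scalemxAr adjU_eigv.
by move/matrixP/(_ i 0); rewrite !mxE !eqxx !mulr1 => -[].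
Qed.

Lemma eq_on_eigv p (X Y : 'M[C]_(p, n)) :
  (forall i, X *m eigv i = Y *m eigv i) -> X = Y.
Proof.
move=> XY; rewrite -[X]mulmx1 -[Y]mulmx1 -UU !mulmxA; congr (_ *m _).
apply/matrixP => a i; have := congr1 (fun M : 'M[C]_(p, 1) => M a 0) (XY i).
by rewrite /eigv !mulmxA -!colE !mxE.
Qed.

Lemma eigv_expand (psi : 'cV[C]_n) : psi = U *m (adjmx U *m psi).
Proof. by rewrite mulmxA UU mul1mx. Qed.

Lemma in_wspaceP al (psi : 'cV[C]_n) : in_wspace A al psi <->
  forall i, (adjmx U *m psi) i 0 != 0 -> omega i = al.
Proof.
set c := adjmx U *m psi.
have -> : in_wspace A al psi <-> forall v, D v *m c = (dpair al v)%:C *: c.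
  split => wsp v.
    move: (wsp v); rewrite iota_mapE => /(congr1 (mulmx (adjmx U))).
    by rewrite !mulmxA UU' mul1mx -!mulmxA -scalemxAr.
  rewrite iota_mapE {1}(eigv_expand psi) -/c -!mulmxA (mulmxA (adjmx U) U) UU'.
  by rewrite mul1mx wsp -scalemxAr -eigv_expand.
clearbody c; split => [wsp i ci | c_supp v].
  apply/rowP => k; move: (wsp (delta_mx 0 k)) => /matrixP/(_ i 0).
  by rewrite mul_diag_mx !mxE !dpair_delta !mxE => /(mulIf ci) [].
apply/matrixP => i j; rewrite ord1 mul_diag_mx !mxE.
by have [->|/c_supp ->] := eqVneq (c i 0) 0; rewrite ?mulr0.
Qed.

Lemma eigv_wspace i : in_wspace A (omega i) (eigv i).
Proof.
apply/in_wspaceP => j; rewrite adjU_eigv mxE.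
by have [->|] := eqVneq j i; rewrite ?eqxx.
Qed.

Lemma is_weightP al : is_weight A al <-> exists i, omega i = al.
Proof.
split => [[psi [psi_neq0 /in_wspaceP psi_al]] | [i <-]].
  have : adjmx U *m psi != 0.
    by apply: contraNneq psi_neq0 => psi0; rewrite (eigv_expand psi) psi0 mulmx0.
  by move=> /matrix_neq0[i [j]]; rewrite ord1 => /psi_al; exists i.
by exists (eigv i); split; [apply: eigv_neq0 | apply: eigv_wspace].
Qed.

Lemma weight_omega i : weight_set A (omega i).
Proof. by apply/is_weightP; exists i. Qed.

Lemma in_HF_coord (F : set 'rV[R]_d) psi : in_HF A F psi ->
  forall i, (adjmx U *m psi) i 0 != 0 -> F (omega i).
Proof.
move=> [k [om [phi [phiP ->]]]] i; rewrite mulmx_sumr summxE => sum_neq0.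
have [j phij] : exists j, (adjmx U *m phi j) i 0 != 0.
  apply: contrapT => phi0; move: sum_neq0; rewrite big1 ?eqxx // => j _.
  by apply: contrapT => phij; apply: phi0; exists j; apply/eqP.
by have [_ [Fj /in_wspaceP ->]] := phiP j.
Qed.

Lemma in_HF_eigv (F : set 'rV[R]_d) i : F (omega i) -> in_HF A F (eigv i).
Proof.
move=> Fi; exists 1%N, (fun=> omega i), (fun=> eigv i); split; last by rewrite big_ord1.
by move=> _; split; [apply: weight_omega | split; [|apply: eigv_wspace]].
Qed.

Lemma pre_span1P i1 v :
  pre_span1 A v <-> forall i, dpair (omega i) v = dpair (omega i1) v.
Proof.
split => [[c iota_c] | omega_v].
  have omega_c i : dpair (omega i) v = c.
    by apply: (@eigv_scale_inj _ _ i); rewrite -iota_eigv iota_c mul_scalar_mx.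
  by move=> i; rewrite !omega_c.
exists (dpair (omega i1) v); apply: eq_on_eigv => i.
by rewrite iota_eigv omega_v mul_scalar_mx.
Qed.

Definition eigprob (G : 'M[C]_n) i :=
  complex.Re ((adjmx (eigv i) *m G *m eigv i) 0 0).

Lemma eigv_form (X : 'M[C]_n) i :
  (adjmx (eigv i) *m X *m eigv i) 0 0 = (adjmx U *m X *m U) i i.
Proof.
have -> : adjmx (eigv i) = delta_mx 0 i *m adjmx U.
  rewrite /eigv adjmxM; congr (_ *m _); apply/matrixP => a b.
  by rewrite !mxE ord1 eqxx andbT; case: (b == i); rewrite ?conjc1 ?conjc0.
have -> : delta_mx 0 i *m adjmx U *m X *m eigv i
          = delta_mx 0 i *m (adjmx U *m X *m U) *m e i :> 'M[C]_1.
  by rewrite /eigv !mulmxA.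
by rewrite -rowE -colE !mxE.
Qed.

Lemma eigprob_ge0 G i : density_op G -> 0 <= eigprob G i.
Proof. by move=> [_ [G_psd _]]; apply: cRe_ge0. Qed.

Lemma eigprob_sum G : density_op G -> \sum_i eigprob G i = 1.
Proof.
move=> [_ [_ trG]]; rewrite /eigprob -cRe_sum.
under eq_bigr do rewrite eigv_form.
by rewrite -/(\tr _) -mulmxA mxtrace_mulC -mulmxA UU mulmx1 trG.
Qed.

Lemma istar_eigprob G : istar A G = \sum_i eigprob G i *: omega i.
Proof.
apply/rowP => k; rewrite !mxE summxE AE !mulmxA mxtrace_mulC !mulmxA.
rewrite /mxtrace cRe_sum; apply: eq_bigr => i _.
rewrite mul_mx_diag [X in complex.Re X]mxE [X in _ * X]mxE mulrC cReMr.
by rewrite [RHS]mxE /eigprob eigv_form [omega i 0 k]mxE mulrC.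
Qed.

Lemma eigprob_eq0 G i : density_op G -> eigprob G i = 0 <-> G *m eigv i = 0.
Proof.
move=> [Gh [G_psd _]]; split; first exact: psd_form_eq0.
by move=> G0; rewrite /eigprob -mulmxA G0 mulmx0 mxE.
Qed.

Lemma weight_diffs_rank i1 k : has_affdim (conv_hull (weight_set A)) k ->
  \rank (\matrix_i (omega i - omega i1)) = k.
Proof.
move=> dimk; apply: (has_affdim_rank (s0 := omega i1) (g := omega) _ _ _ _ dimk).
- exact: conv_hullW (weight_omega i1).
- by move=> j; apply: conv_hullW (weight_omega j).
- by move=> j; rewrite rowK.
move=> s [N [p [l [Sp [_ [l1 ->]]]]]]; rewrite conv_comb_subr //.
apply: summx_sub => j _; apply: scalemx_sub.
have [i <-] := proj1 (is_weightP _) (Sp j).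
by apply: (eq_row_sub i); rewrite rowK.
Qed.

Section Coisometry.
Variables (m : nat) (P : 'M[C]_(m, n)) (F : set 'rV[R]_d).
Hypotheses (PP : P *m adjmx P = 1%:M)
  (HP : forall psi : 'cV[C]_n,
          (exists x : 'cV[C]_m, psi = adjmx P *m x) <-> in_HF A F psi).

Lemma P_eigv_out i : ~ F (omega i) -> P *m eigv i = 0.
Proof.
move=> nFi; have PU0 j : (adjmx U *m adjmx P) i j = 0.
  have : in_HF A F (adjmx P *m delta_mx j (0 : 'I_1)) by apply/HP; exists (delta_mx j 0).
  move/in_HF_coord => /(_ i); rewrite mulmxA -colE mxE.
  by case: eqP => // _ /(_ isT).
apply/matrixP => a b; rewrite ord1 /eigv mulmxA -colE [RHS]mxE.
have -> : P *m U = adjmx (adjmx U *m adjmx P) by rewrite adjmxM !adjmxK.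
by rewrite mxE adjmxE PU0 conjc0.
Qed.

Lemma coproj_eigv i :
  coproj P *m eigv i = if `[< F (omega i) >] then eigv i else 0.
Proof.
case: asboolP => Fi; last by rewrite coprojE -mulmxA P_eigv_out // mulmx0.
have [x ->] : exists x, eigv i = adjmx P *m x by apply/HP; apply: in_HF_eigv.
by rewrite mulmxA (coproj_adj PP).
Qed.

Lemma coproj_coord (psi : 'cV[C]_n) i :
  coproj P *m psi = psi -> ~ F (omega i) -> (adjmx U *m psi) i 0 = 0.
Proof.
move=> Qpsi nFi; rewrite -Qpsi mulmxA -coproj_herm -adjmxM mxE big1 // => j _.
rewrite adjmxE; have -> : (coproj P *m U) j i = (coproj P *m eigv i) j 0.
  by rewrite /eigv mulmxA -colE [RHS]mxE.
by rewrite coproj_eigv (asboolF nFi) mxE conjc0 mul0r.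
Qed.

Lemma iota_coproj v : iota_map A v *m coproj P = coproj P *m iota_map A v.
Proof.
apply: eq_on_eigv => i; rewrite -!mulmxA coproj_eigv iota_eigv -scalemxAr coproj_eigv.
by case: asboolP => _; rewrite ?iota_eigv ?mulmx0 ?scaler0.
Qed.

Lemma restrA_abelian : abelian_th A -> abelian_th (restrA P A).
Proof.
move=> Ab v w; rewrite !iota_restrA.
have mulE x y : P *m iota_map A x *m adjmx P *m (P *m iota_map A y *m adjmx P)
                = P *m (iota_map A x *m iota_map A y) *m adjmx P.
  rewrite !mulmxA -(mulmxA _ (adjmx P) P) -coprojE -(mulmxA _ _ (coproj P)).
  by rewrite iota_coproj !mulmxA (P_coproj PP).
by rewrite !mulE Ab.
Qed.

Lemma restrA_weightP al :
  weight_set (restrA P A) al <-> weight_set A al /\ F al.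
Proof.
split => [[x [x_neq0 x_wsp]] | [al_wt Fal]].
  pose psi := adjmx P *m x.
  have Qpsi : coproj P *m psi = psi by rewrite /psi mulmxA (coproj_adj PP).
  have psi_neq0 : psi != 0.
    apply: contraNneq x_neq0 => psi0.
    by rewrite -[x]mul1mx -PP -mulmxA -/psi psi0 mulmx0.
  have psi_wsp : in_wspace A al psi.
    move=> v; rewrite -{1}Qpsi mulmxA iota_coproj coprojE -!mulmxA.
    have -> : P *m (iota_map A v *m (adjmx P *m x)) = iota_map (restrA P A) v *m x.
      by rewrite iota_restrA !mulmxA.
    by rewrite x_wsp scalemxAr.
  have : adjmx U *m psi != 0.
    by apply: contraNneq psi_neq0 => c0; rewrite (eigv_expand psi) c0 mulmx0.
  move=> /matrix_neq0[i [j]]; rewrite ord1 => ci.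
  rewrite -(proj1 (in_wspaceP al psi) psi_wsp i ci); split; first exact: weight_omega.
  by apply: contrapT => nFi; rewrite (coproj_coord Qpsi nFi) eqxx in ci.
have [i al_i] := proj1 (is_weightP al) al_wt.
have PQu : adjmx P *m (P *m eigv i) = eigv i.
  by rewrite mulmxA -coprojE coproj_eigv asboolT // al_i.
exists (P *m eigv i); split.
  by apply: contraNneq (eigv_neq0 i) => Pu0; rewrite -PQu Pu0 mulmx0.
move=> v; rewrite iota_restrA -mulmxA PQu -mulmxA iota_eigv al_i.
by rewrite -scalemxAr.
Qed.

Lemma pre_span1_restrP i1 v : F (omega i1) -> pre_span1 (restrA P A) v <->
  forall i, F (omega i) -> dpair (omega i) v = dpair (omega i1) v.
Proof.
move=> Fi1; split => [[c iota_c] | omega_v].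
  have omega_c i : F (omega i) -> dpair (omega i) v = c.
    move=> Fi; have Qu : coproj P *m eigv i = eigv i by rewrite coproj_eigv asboolT.
    apply: (@eigv_scale_inj _ _ i); rewrite -iota_eigv -{1}Qu mulmxA iota_coproj.
    rewrite coprojE -!mulmxA.
    have -> : P *m (iota_map A v *m eigv i) = iota_map (restrA P A) v *m (P *m eigv i).
      by rewrite iota_restrA -!mulmxA (mulmxA (adjmx P)) -coprojE Qu.
    by rewrite iota_c mul_scalar_mx -scalemxAr mulmxA -coprojE Qu.
  by move=> i Fi; rewrite !omega_c.
exists (dpair (omega i1) v).
have iota_Q : iota_map A v *m coproj P = ((dpair (omega i1) v)%:C)%:M *m coproj P.
  apply: eq_on_eigv => i; rewrite -!mulmxA coproj_eigv.
  by case: asboolP => Fi; rewrite ?mulmx0 // iota_eigv omega_v // mul_scalar_mx.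
rewrite iota_restrA -{1}(coproj_adj PP) !mulmxA -(mulmxA _ _ (coproj P)) iota_Q.
by rewrite mul_scalar_mx -scalemxAr -scalemxAl (P_coproj PP) PP scalemx1.
Qed.

Section Facet.
Variables (v0 : 'rV[R]_d) (c0 : R).
Hypotheses (supp : forall x, conv_hull (weight_set A) x -> dpair x v0 <= c0)
  (FE : F = [set x | conv_hull (weight_set A) x /\ dpair x v0 = c0]).

Lemma face_istar_eigvP G : density_op G ->
  F (istar A G) <-> forall i, ~ F (omega i) -> G *m eigv i = 0.
Proof.
move=> DG; rewrite istar_eigprob.
rewrite (face_conv_combP supp FE weight_omega (fun i => eigprob_ge0 i DG) (eigprob_sum DG)).
split => [FG i nFi | G0 i pi_neq0].
  apply/(eigprob_eq0 i DG); apply/eqP; apply: contra_notT nFi.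
  exact: FG.
by apply: contrapT => /G0 /(eigprob_eq0 i DG) pi0; rewrite pi0 eqxx in pi_neq0.
Qed.

Lemma face_istar_coprojP G : density_op G ->
  F (istar A G) <-> G = coproj P *m G *m coproj P.
Proof.
move=> DG; have [Gh _] := DG; rewrite (face_istar_eigvP DG).
split => [G0 | GQ i nFi]; last first.
  by rewrite GQ -mulmxA coproj_eigv (asboolF nFi) mulmx0.
have GQ : G *m coproj P = G.
  apply: eq_on_eigv => i; rewrite -mulmxA coproj_eigv.
  by case: asboolP => Fi //; rewrite mulmx0 G0.
have QG : coproj P *m G = G by rewrite -[in LHS]Gh -coproj_herm -adjmxM GQ Gh.
by rewrite -mulmxA GQ QG.
Qed.

Lemma face_istar_coproj G : density_op G -> F (istar A G) -> coproj P *m G = G.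
Proof.
move=> DG /(face_istar_coprojP DG) GQ.
by rewrite [in LHS]GQ !mulmxA (coproj_idem PP) -GQ.
Qed.

Lemma face_istar_compress G : density_op G -> F (istar A G) ->
  G = adjmx P *m (P *m G *m adjmx P) *m P.
Proof. by move=> DG /(face_istar_coprojP DG) {1}->; rewrite coprojE !mulmxA. Qed.

Lemma face_istar_lift G' : density_op G' -> F (istar A (adjmx P *m G' *m P)).
Proof.
by move=> DG'; apply/(face_istar_coprojP (lift_density PP DG')); rewrite (coproj_lift PP).
Qed.

Lemma face_densityP G : density_op G -> F (istar A G) <-> in_EF P G.
Proof.
move=> DG; split => [FG | [G' [DG' ->]]]; last exact: face_istar_lift.
exists (P *m G *m adjmx P); split; last exact: face_istar_compress.
exact: compress_density (face_istar_coproj DG FG).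
Qed.

Lemma face_pureP G : pure_state G -> F (istar A G) <-> in_PF P G.
Proof.
move=> PG; have DG := pure_state_density PG.
split => [FG | [G' [PG' ->]]]; last exact/face_istar_lift/pure_state_density.
exists (P *m G *m adjmx P); split; last exact: face_istar_compress.
exact: compress_pure (face_istar_coproj DG FG).
Qed.

Lemma facet_weight : (exists x, F x) -> exists i, F (omega i).
Proof.
move=> [x Fx]; have [N [p [l [Sp [l_ge0 [l1 xE]]]]]] := face_conv FE Fx.
move: Fx; rewrite xE (face_conv_combP supp FE Sp l_ge0 l1) => Fp.
have [j lj] : exists j, l j != 0.
  apply: contrapT => l0; move: l1; rewrite big1 => [/eqP|j _].
    by rewrite eq_sym oner_eq0.
  by apply/eqP; apply: contra_notT l0 => lj; exists j.
by have [i pj] := proj1 (is_weightP _) (Sp j); exists i; rewrite pj; apply: Fp.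
Qed.

Lemma facet_diffs_rank i1 k : F (omega i1) -> has_affdim F k ->
  \rank (\matrix_i (if `[< F (omega i) >] then omega i - omega i1 else 0)) = k.
Proof.
move=> Fi1 dimk.
apply: (has_affdim_rank (s0 := omega i1)
          (g := fun i => if `[< F (omega i) >] then omega i else omega i1) Fi1 _ _ _ dimk).
- by move=> j; case: asboolP.
- by move=> j; rewrite rowK; case: asboolP => //; rewrite subrr.
move=> s Fs; have [N [p [l [Sp [l_ge0 [l1 sE]]]]]] := face_conv FE Fs.
move: Fs; rewrite sE (face_conv_combP supp FE Sp l_ge0 l1) => Fp.
rewrite conv_comb_subr //; apply: summx_sub => j _.
have [->|lj] := eqVneq (l j) 0; first by rewrite scale0r sub0mx.
apply: scalemx_sub; have [i pj] := proj1 (is_weightP _) (Sp j).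
have Fi : F (omega i) by rewrite pj; apply: Fp.
by apply: (eq_row_sub i); rewrite rowK asboolT // pj.
Qed.

Lemma restr_pre_span1_dim k : (exists x, F x) -> has_affdim F k ->
  has_affdim (conv_hull (weight_set A)) k.+1 ->
  exists j, has_dim (pre_span1 A) j /\ has_dim (pre_span1 (restrA P A)) j.+1.
Proof.
move=> F_neq0 dimF dimQ; have [i1 Fi1] := facet_weight F_neq0.
have rk1 := weight_diffs_rank i1 dimQ; have rk2 := facet_diffs_rank Fi1 dimF.
have lt_kd : (k < d)%N by rewrite -rk1 rank_leq_col.
exists (d - k.+1)%N; split.
  rewrite -{1}rk1; apply: has_dim_annihilator => v; rewrite (pre_span1P i1).
  split => h i; move: (h i); rewrite rowK dpairB; first by move=> ->; rewrite subrr.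
  by move/eqP; rewrite subr_eq0 => /eqP.
have -> : (d - k.+1).+1 = (d - k)%N by lia.
rewrite -{1}rk2; apply: has_dim_annihilator => v; rewrite (pre_span1_restrP _ Fi1).
split => h i; move: (h i); rewrite rowK; case: asboolP => Fi.
- by move=> /(_ Fi); rewrite dpairB => ->; rewrite subrr.
- by move=> _; rewrite dpairE mul0mx mxE.
- by rewrite dpairB => /eqP; rewrite subr_eq0 => /eqP ->.
- by move=> _ /Fi.
Qed.

End Facet.
End Coisometry.

End JointEigenbasis.

Local Open Scope classical_set_scope.

Theorem proposition4p11 (R : realType) (d n m : nat)
    (A : 'I_d -> 'M[R[i]]_n) (W : 'M[R[i]]_n) (F : set 'rV[R]_d)
    (P : 'M[R[i]]_(m, n)) :
  (forall k, is_herm (A k)) -> is_herm W -> abelian_th A ->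
  is_facet (conv_hull (weight_set A)) F ->
  (* P : H -> C^m identifies H_F with C^m: P P^dagger = 1 and the
     range of P^dagger (= the orthogonal complement of ker P) is H_F *)
  P *m adjmx P = 1%:M ->
  (forall psi : 'cV[R[i]]_n, (exists x : 'cV[R[i]]_m, psi = adjmx P *m x)
                             <-> in_HF A F psi) ->
  (* (1) *) abelian_th (restrA P A) /\
  (* (2) *) (forall alpha, weight_set (restrA P A) alpha <-> weight_set A alpha /\ F alpha) /\
  (* (3) *) (exists k : nat, has_dim (pre_span1 A) k /\
                             has_dim (pre_span1 (restrA P A)) k.+1) /\
  (* (4) *) (forall G : 'M[R[i]]_n, pure_state G -> (F (istar A G) <-> in_PF P G)) /\
  (* (5) *) (forall G : 'M[R[i]]_n, density_op G -> (F (istar A G) <-> in_EF P G)) /\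
  (* (6) *) (forall rho, F rho -> Fp (restrA P A) (restrW P W) rho = Fp A W rho) /\
            (forall rho, ~ F rho -> Fp (restrA P A) (restrW P W) rho = +oo%E) /\
  (* (7) *) (forall rho, F rho -> Fe (restrA P A) (restrW P W) rho = Fe A W rho) /\
            (forall rho, ~ F rho -> Fe (restrA P A) (restrW P W) rho = +oo%E).
Proof.
move=> Ah _ Ab [[v0 [c0 [supp FE]]] [F_neq0 [k [dimF dimQ]]]] PP HP.
have [U [lam [UU UU' AE]]] := abelian_spectral Ah Ab.
have pureP := face_pureP UU UU' AE PP HP supp FE.
have densityP := face_densityP UU UU' AE PP HP supp FE.
have lift_in := face_istar_lift UU UU' AE PP HP supp FE.
split; first exact (restrA_abelian UU UU' AE PP HP Ab).
split; first exact (restrA_weightP UU UU' AE PP HP).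
split; first exact (restr_pre_span1_dim UU UU' AE PP HP supp FE F_neq0 dimF dimQ).
split; first by move=> G PG; apply: pureP.
split; first by move=> G DG; apply: densityP.
split.
  move=> rho; apply: restr_state_inf_in; first exact: lift_pure.
  by move=> G PG /(pureP _ PG).
split; first by move=> rho; apply: restr_state_inf_out => G' /pure_state_density /lift_in.
split.
  move=> rho; apply: restr_state_inf_in; first exact: lift_density.
  by move=> G DG /(densityP _ DG).
by move=> rho; apply: restr_state_inf_out => G' /lift_in.
Qed.
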